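(* Let $G$ be a finite group, $\alpha\in\mathbb{Z}_{\ge0}$, and let $(A,M)$ be an irreducible NIM-rep of the near-group fusion ring $K(G,\alpha)$. If $m,m'\in M$ lie in the same $G$-orbit (i.e. $m'=g\vartriangleright m$ for some $g\in G$), then $X\vartriangleright m=X\vartriangleright m'$.
   Context: The near-group fusion ring $K(G,\alpha)$ is the free $\mathbb{Z}$-module with basis $G\cup\{X\}$, with multiplication given by the group law on $G$, $gX=Xg=X$ for $g\in G$, and $X^2=\sum_{g\in G}g+\alpha X$; the involution is $g^*=g^{-1}$, $X^*=X$. A NIM-rep of a fusion ring $(R,B)$ is a nonzero left $R$-module $A$ which is a free $\mathbb{Z}$-module with a fixed basis $M$, such that each $b\vartriangleright m$ ($b\in B$, $m\in M$) is a non-negative integer combination of elements of $M$, and such that for the symmetric bilinear form with $(m,m')=\delta_{m,m'}$ on $M$, $(b\vartriangleright m,m')=(m,b^*\vartriangleright m')$. For NIM-reps of $K(G,\alpha)$ each $g\in G$ permutes $M$, giving a $G$-action on $M$ whose orbits partition $M$. A NIM-rep is irreducible if no proper nonempty subset of $M$ spans an $R$-submodule. *)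

From mathcomp Require Import all_boot all_fingroup.
Set Implicit Arguments. Unset Strict Implicit. Unset Printing Implicit Defensive.

(* The near-group fusion ring K(G, alpha): basis G ∪ {X}, encoded as
   [option gT] with [Some g] = g and [None] = X. *)

Definition ng_mul (gT : finGroupType) (alpha : nat) (b b' c : option gT) : nat :=
  match b, b' with
  | Some g, Some h => nat_of_bool (c == Some (g * h)%g)
  | Some _, None | None, Some _ => nat_of_bool (c == None)
  | None, None => if c is Some _ then 1 else alpha
  end.

Definition ng_dual (gT : finGroupType) (b : option gT) : option gT :=
  omap (fun g => (g^-1)%g) b.

(* A NIM-rep of K(G,alpha) with (finite) basis M, given by its non-negative
   integer structure constants: N b m m' = coefficient of m' in b |> m. *)
Definition is_NIMrep (gT : finGroupType) (alpha : nat) (M : finType)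
  (N : option gT -> M -> M -> nat) : Prop :=
  [/\ 0 < #|M|,
      (forall m m', N (Some 1%g) m m' = nat_of_bool (m == m')),
      (forall b b' m m'',
          \sum_(m' : M) N b' m m' * N b m' m''
          = \sum_(c : option gT) ng_mul alpha b b' c * N c m m'')
    & (forall b m m', N b m m' = N (ng_dual b) m' m)].

(* Irreducible: every nonempty subset of M whose span is a submodule
   (i.e. closed under taking supports of b |> m) is all of M. *)
Definition NIM_irreducible (gT : finGroupType) (M : finType)
  (N : option gT -> M -> M -> nat) : Prop :=
  forall S : {set M}, S != set0 ->
    (forall b m m', m \in S -> N b m m' != 0 -> m' \in S) ->
    S = setT.

From mathcomp Require Import all_boot all_fingroup.
Set Implicit Arguments. Unset Strict Implicit. Unset Printing Implicit Defensive.

(* If [g |> m = m'] then [X |> m' = X |> (g |> m) = (X g) |> m = X |> m],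
   by module associativity and [X g = X] in the near-group ring. *)

Lemma sum_nat_deltal (T : finType) (a : T) (F : T -> nat) :
  \sum_(x : T) (x == a) * F x = F a.
Proof.
by rewrite (bigD1 a) //= eqxx mul1n big1 ?addn0 // => x /negbTE ->.
Qed.

Lemma ng_mulXg (gT : finGroupType) (alpha : nat) (g : gT) (c : option gT) :
  ng_mul alpha None (Some g) c = (c == None).
Proof. by []. Qed.

Section ModuleAssociativity.

Variables (gT : finGroupType) (alpha : nat) (M : finType).
Variable N : option gT -> M -> M -> nat.
Hypothesis N_assoc : forall b b' m m'',
  \sum_(m' : M) N b' m m' * N b m' m''
  = \sum_(c : option gT) ng_mul alpha b b' c * N c m m''.

Lemma act_basis_mul (b b' : option gT) (m m' : M) :
  (forall x, N b' m x = (x == m')) ->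
  forall x, N b m' x = \sum_(c : option gT) ng_mul alpha b b' c * N c m x.
Proof.
move=> b'm x; rewrite -N_assoc.
by under eq_bigr => y _ do rewrite b'm; rewrite sum_nat_deltal.
Qed.

Lemma X_act_basis_translate (g : gT) (m m' : M) :
  (forall x, N (Some g) m x = (x == m')) ->
  forall x, N None m' x = N None m x.
Proof.
move=> gm x; rewrite (act_basis_mul None gm).
by under eq_bigr => c _ do rewrite ng_mulXg; rewrite sum_nat_deltal.
Qed.

End ModuleAssociativity.

Theorem proposition3p9 (gT : finGroupType) (alpha : nat) (M : finType)
  (N : option gT -> M -> M -> nat) :
  is_NIMrep alpha N -> NIM_irreducible N ->
  forall m m' : M,
    (exists g : gT, forall x : M, N (Some g) m x = nat_of_bool (x == m')) ->
    forall x : M, N None m x = N None m' x.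
Proof.
move=> [_ _ N_assoc _] _ m m' [g gm] x.
by rewrite (X_act_basis_translate N_assoc gm).
Qed.
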